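(* Let $X$ be a compact Hausdorff space. Then $\mathscr{C}_{\mathrm{a.e.}}(X)$ and all its subrings are strongly localizable archimedean partially ordered commutative rings.
   Context: $\mathscr{C}_{\mathrm{a.e.}}(X)$: consider continuous real-valued functions $f$ defined on dense open subsets $\operatorname{dom}f$ of $X$; define $f+g$, $fg$ pointwise on $\operatorname{dom}f\cap\operatorname{dom}g$; $f\approx g$ iff $f|_A=g|_A$ for some dense open $A\subseteq\operatorname{dom}f\cap\operatorname{dom}g$. $\mathscr{C}_{\mathrm{a.e.}}(X)$ is the quotient commutative ring, ordered by $[f]\le[g]$ iff $f|_A\le g|_A$ pointwise for some dense open $A\subseteq\operatorname{dom}f\cap\operatorname{dom}g$. Subrings contain $1$ and carry the induced order. A partially ordered commutative ring is a commutative ring with partial order $\le$, $r\le s\Rightarrow r+t\le s+t$, positive cone $R^+$ closed under multiplication and containing all squares. $\mathbb{N}=\{1,2,\dots\}$. Archimedean: $kg+h\in R^+$ for all $k\in\mathbb{N}$ implies $g\in R^+$. $\mathrm{Loc}(R)$: the $s\in1+R^+$ with $rs\in R^+\Rightarrow r\in R^+$ for all $r$. Strongly localizable: $r^2\in R^+$ for all $r$ and $\mathrm{Loc}(R)=1+R^+$. *)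

From HB Require Import structures.
From mathcomp Require Import all_boot all_order all_algebra.
From mathcomp Require Import all_classical all_reals all_analysis.
Set Implicit Arguments. Unset Strict Implicit. Unset Printing Implicit Defensive.
Import Order.TTheory GRing.Theory Num.Theory.
Import numFieldNormedType.Exports.
Local Open Scope classical_set_scope.
Local Open Scope ring_scope.

Section AE.
Variables (X : topologicalType) (R : realType).

(* A representative of an element of C_ae(X): a domain dom f and a function
   (only its values on the domain matter). *)
Definition aerep := (set X * (X -> R))%type.

Definition is_ae_on (A : set X) (g : X -> R) : Prop :=
  [/\ open A, dense A & {within A, continuous g}].
Definition is_ae (f : aerep) : Prop := is_ae_on f.1 f.2.

Definition ae_zero : aerep := (setT, fun _ => 0).
Definition ae_one  : aerep := (setT, fun _ => 1).
Definition ae_add (f g : aerep) : aerep := (f.1 `&` g.1, fun x => f.2 x + g.2 x).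
Definition ae_opp (f : aerep) : aerep := (f.1, fun x => - f.2 x).
Definition ae_mul (f g : aerep) : aerep := (f.1 `&` g.1, fun x => f.2 x * g.2 x).
Definition ae_sub (f g : aerep) : aerep := ae_add f (ae_opp g).
Fixpoint ae_natmul (g : aerep) (k : nat) : aerep :=
  match k with 0%N => ae_zero | k'.+1 => ae_add (ae_natmul g k') g end.

Definition ae_eq (f g : aerep) : Prop :=
  exists A : set X, [/\ open A, dense A, A `<=` f.1 `&` g.1 &
                        forall x, A x -> f.2 x = g.2 x].
Definition ae_le (f g : aerep) : Prop :=
  exists A : set X, [/\ open A, dense A, A `<=` f.1 `&` g.1 &
                        forall x, A x -> f.2 x <= g.2 x].

Definition ae_pos (f : aerep) : Prop := ae_le ae_zero f.

(* S (a set of representatives, closed under ≈) is a subring of C_ae(X). *)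
Definition ae_saturated (S : aerep -> Prop) : Prop :=
  forall f g, S f -> is_ae g -> ae_eq f g -> S g.
Definition ae_ring_closed (S : aerep -> Prop) : Prop :=
  [/\ S ae_zero, S ae_one,
      forall f g, S f -> S g -> S (ae_add f g),
      forall f, S f -> S (ae_opp f) &
      forall f g, S f -> S g -> S (ae_mul f g)].
Definition ae_subring (S : aerep -> Prop) : Prop :=
  [/\ forall f, S f -> is_ae f, ae_saturated S & ae_ring_closed S].

Definition po_comm_ring (S : aerep -> Prop) : Prop :=
  [/\
      ae_ring_closed S,
      [/\ forall f, S f -> ae_eq f f,
          forall f g, S f -> S g -> ae_eq f g -> ae_eq g f,
          forall f g h, S f -> S g -> S h -> ae_eq f g -> ae_eq g h -> ae_eq f h,
          forall f f' g g', S f -> S f' -> S g -> S g' -> ae_eq f f' -> ae_eq g g' ->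
            ae_eq (ae_add f g) (ae_add f' g') /\ ae_eq (ae_mul f g) (ae_mul f' g') &
          forall f f', S f -> S f' -> ae_eq f f' -> ae_eq (ae_opp f) (ae_opp f')],
      [/\ [/\ forall f g h, S f -> S g -> S h ->
            ae_eq (ae_add f (ae_add g h)) (ae_add (ae_add f g) h),
          forall f g, S f -> S g -> ae_eq (ae_add f g) (ae_add g f),
          forall f, S f -> ae_eq (ae_add ae_zero f) f &
          forall f, S f -> ae_eq (ae_add (ae_opp f) f) ae_zero] &
      [/\ forall f g h, S f -> S g -> S h ->
            ae_eq (ae_mul f (ae_mul g h)) (ae_mul (ae_mul f g) h),
          forall f g, S f -> S g -> ae_eq (ae_mul f g) (ae_mul g f),
          forall f, S f -> ae_eq (ae_mul ae_one f) f &
          forall f g h, S f -> S g -> S h ->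
            ae_eq (ae_mul f (ae_add g h)) (ae_add (ae_mul f g) (ae_mul f h))]],
      [/\ forall f f' g g', S f -> S f' -> S g -> S g' -> ae_eq f f' -> ae_eq g g' ->
            ae_le f g -> ae_le f' g',
          forall f, S f -> ae_le f f,
          forall f g h, S f -> S g -> S h -> ae_le f g -> ae_le g h -> ae_le f h &
          forall f g, S f -> S g -> ae_le f g -> ae_le g f -> ae_eq f g] &
      [/\ forall r s t, S r -> S s -> S t -> ae_le r s -> ae_le (ae_add r t) (ae_add s t),
      forall r s, S r -> S s -> ae_pos r -> ae_pos s -> ae_pos (ae_mul r s) &
      forall r, S r -> ae_pos (ae_mul r r)]].

Definition ae_archimedean (S : aerep -> Prop) : Prop :=
  forall g h, S g -> S h ->
    (forall k : nat, (1 <= k)%N -> ae_pos (ae_add (ae_natmul g k) h)) -> ae_pos g.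

Definition ae_one_plus_cone (S : aerep -> Prop) (s : aerep) : Prop :=
  exists p, [/\ S p, ae_pos p & ae_eq s (ae_add ae_one p)].

Definition ae_Loc (S : aerep -> Prop) (s : aerep) : Prop :=
  [/\ S s, ae_one_plus_cone S s &
      forall r, S r -> ae_pos (ae_mul r s) -> ae_pos r].

Definition ae_strongly_localizable (S : aerep -> Prop) : Prop :=
  (forall r, S r -> ae_pos (ae_mul r r)) /\
  (forall s, S s -> (ae_Loc S s <-> ae_one_plus_cone S s)).

Definition ae_good (S : aerep -> Prop) : Prop :=
  [/\ po_comm_ring S, ae_archimedean S & ae_strongly_localizable S].

End AE.

From Pilot Require Import Defs.
From HB Require Import structures.
From mathcomp Require Import all_boot all_order all_algebra.
From mathcomp Require Import all_classical all_reals all_analysis.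
From mathcomp Require Import lra.
(* Shadow MathComp-Analysis's measure-theoretic [ae_eq] again. *)
Import Pilot.Defs.
Set Implicit Arguments. Unset Strict Implicit. Unset Printing Implicit Defensive.
Import Order.TTheory GRing.Theory Num.Theory.
Import numFieldNormedType.Exports.
Local Open Scope classical_set_scope.
Local Open Scope ring_scope.

(* Dense open sets are closed under finite intersections, so every identity or
   inequality needed between classes holds pointwise on the intersection of the
   finitely many dense open sets involved.  The only non-formal step is that an
   a.e.-nonnegative representative is nonnegative on its whole domain, by
   continuity and density; it reduces the archimedean property to that of R. *)

Lemma archimedean_ge0 (R : archiRealFieldType) (a b : R) :
  (forall k, (0 < k)%N -> 0 <= a *+ k + b) -> 0 <= a.
Proof.
move=> kab; rewrite leNgt; apply/negP => a_lt0.
pose k := (Num.truncn (b / - a)).+1.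
have b_lt : b < k%:R * - a.
  by rewrite -ltr_pdivrMr ?oppr_gt0 //; exact: truncnS_gt.
by move: (kab k isT); rewrite -mulr_natr mulrC; nra.
Qed.

Section DenseOpen.
Variable X : topologicalType.

Definition dense_open (A : set X) := open A /\ dense A.

Lemma dense_openT : dense_open setT.
Proof. by split; [exact: openT | move=> O [x Ox] _; exists x]. Qed.

Lemma dense_openI A B : dense_open A -> dense_open B -> dense_open (A `&` B).
Proof. by move=> [oA dA] [oB dB]; split; [exact: openI | exact: denseI]. Qed.

End DenseOpen.

Section Representatives.
Variables (X : topologicalType) (R : realType).
Implicit Types (f g h : aerep X R) (A : set X).

Lemma ae_eqE f g : ae_eq f g <->
  exists A, [/\ dense_open A, A `<=` f.1 `&` g.1 & forall x, A x -> f.2 x = g.2 x].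
Proof. by split=> -[A []]; [exists A | case=> ? ? ? ?; exists A]. Qed.

Lemma ae_leE f g : ae_le f g <->
  exists A, [/\ dense_open A, A `<=` f.1 `&` g.1 & forall x, A x -> f.2 x <= g.2 x].
Proof. by split=> -[A []]; [exists A | case=> ? ? ? ?; exists A]. Qed.

Lemma is_ae_dense_open f : is_ae f -> dense_open f.1.
Proof. by case. Qed.

Lemma is_ae_cvg f x : is_ae f -> f.1 x -> f.2 @ x --> f.2 x.
Proof.
case=> oA _; rewrite continuous_open_subspace // => cf fx.
by apply: cf; rewrite in_setE.
Qed.

Lemma cvg_is_ae A (u : X -> R) :
  dense_open A -> (forall x, A x -> u @ x --> u x) -> is_ae (A, u).
Proof.
move=> [oA dA] cu; split => //=.
by rewrite continuous_open_subspace // => x; rewrite in_setE; exact: cu.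
Qed.

Lemma is_ae_ring_closed : ae_ring_closed (@is_ae X R).
Proof.
have ae_cst (c : R) : is_ae (setT : set X, fun=> c).
  by apply: cvg_is_ae => [|x _]; [exact: dense_openT | exact: cvg_cst].
have ae_dom2 f g : is_ae f -> is_ae g -> dense_open (f.1 `&` g.1).
  by move=> /is_ae_dense_open df /is_ae_dense_open dg; exact: dense_openI.
split; [exact: ae_cst | exact: ae_cst | | |].
- move=> f g af ag; apply: cvg_is_ae => [|x [fx gx]]; first exact: ae_dom2.
  exact: cvgD (is_ae_cvg af fx) (is_ae_cvg ag gx).
- move=> f af; apply: cvg_is_ae => [|x fx]; first exact: is_ae_dense_open.
  exact: cvgN (is_ae_cvg af fx).
- move=> f g af ag; apply: cvg_is_ae => [|x [fx gx]]; first exact: ae_dom2.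
  exact: cvgM (is_ae_cvg af fx) (is_ae_cvg ag gx).
Qed.

Lemma is_ae_natmul g k : is_ae g -> is_ae (ae_natmul g k).
Proof.
have [ae0 _ aeD _ _] := is_ae_ring_closed.
by move=> ag; elim: k => [|k IH] //=; exact: aeD.
Qed.

Lemma ae_natmul_dom g k : g.1 `<=` (ae_natmul g k).1.
Proof. by elim: k => [|k IH] //= x gx; split=> //; exact: IH. Qed.

Lemma ae_natmulE g k x : (ae_natmul g k).2 x = g.2 x *+ k.
Proof. by elim: k => [|k IH] /=; rewrite ?mulr0n // IH mulrS addrC. Qed.

Lemma ae_eq_ext f g : dense_open f.1 -> f.1 `<=` g.1 -> f.2 =1 g.2 -> ae_eq f g.
Proof. by move=> df fg e; apply/ae_eqE; exists f.1; split=> // x fx; split=> //; exact: fg. Qed.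

Lemma ae_eq_refl f : dense_open f.1 -> ae_eq f f.
Proof. by move=> df; exact: ae_eq_ext. Qed.

Lemma ae_eq_sym f g : ae_eq f g -> ae_eq g f.
Proof.
move=> /ae_eqE [A [dA sA eA]]; apply/ae_eqE; exists A.
by split=> // x /[dup] /sA [? ?] /eA.
Qed.

Lemma ae_eq_trans f g h : ae_eq f g -> ae_eq g h -> ae_eq f h.
Proof.
move=> /ae_eqE [A [dA sA eA]] /ae_eqE [B [dB sB eB]].
apply/ae_eqE; exists (A `&` B); split; first exact: dense_openI.
  by move=> x [/sA [? _] /sB [_ ?]].
by move=> x [/eA -> /eB].
Qed.

Definition ae_lift2 (op : R -> R -> R) f g : aerep X R :=
  (f.1 `&` g.1, fun x => op (f.2 x) (g.2 x)).

Lemma ae_eq_lift2 op f f' g g' :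
  ae_eq f f' -> ae_eq g g' -> ae_eq (ae_lift2 op f g) (ae_lift2 op f' g').
Proof.
move=> /ae_eqE [A [dA sA eA]] /ae_eqE [B [dB sB eB]].
apply/ae_eqE; exists (A `&` B); split; first exact: dense_openI.
  by move=> x [/sA [? ?] /sB [? ?]].
by move=> x [/eA /= -> /eB ->].
Qed.

Lemma ae_eq_opp f f' : ae_eq f f' -> ae_eq (ae_opp f) (ae_opp f').
Proof.
move=> /ae_eqE [A [dA sA eA]]; apply/ae_eqE; exists A.
by split=> // x /eA /= ->.
Qed.

Lemma ae_eq_le f g : ae_eq f g -> ae_le f g.
Proof.
move=> /ae_eqE [A [dA sA eA]]; apply/ae_leE; exists A.
by split=> // x /eA ->.
Qed.

Lemma ae_le_trans f g h : ae_le f g -> ae_le g h -> ae_le f h.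
Proof.
move=> /ae_leE [A [dA sA lA]] /ae_leE [B [dB sB lB]].
apply/ae_leE; exists (A `&` B); split; first exact: dense_openI.
  by move=> x [/sA [? _] /sB [_ ?]].
by move=> x [/lA /le_trans le1 /lB /le1].
Qed.

Lemma ae_le_anti f g : ae_le f g -> ae_le g f -> ae_eq f g.
Proof.
move=> /ae_leE [A [dA sA lA]] /ae_leE [B [dB sB lB]].
apply/ae_eqE; exists (A `&` B); split; first exact: dense_openI.
  by move=> x [/sA ? _].
by move=> x [/lA le1 /lB le2]; apply/eqP; rewrite eq_le le1 le2.
Qed.

Lemma ae_le_add f g h : dense_open h.1 -> ae_le f g -> ae_le (ae_add f h) (ae_add g h).
Proof.
move=> dh /ae_leE [A [dA sA lA]].
apply/ae_leE; exists (A `&` h.1); split; first exact: dense_openI.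
  by move=> x [/sA [? ?] ?].
by move=> x [/lA le1 _] /=; rewrite lerD2r.
Qed.

Lemma ae_pos_mul f g : ae_pos f -> ae_pos g -> ae_pos (ae_mul f g).
Proof.
move=> /ae_leE [A [dA sA lA]] /ae_leE [B [dB sB lB]].
apply/ae_leE; exists (A `&` B); split; first exact: dense_openI.
  by move=> x [/sA [_ ?] /sB [_ ?]].
by move=> x [/lA ? /lB ?] /=; exact: mulr_ge0.
Qed.

Lemma ae_pos_sqr f : dense_open f.1 -> ae_pos (ae_mul f f).
Proof.
move=> df; apply/ae_leE; exists f.1; split=> // x _ /=.
by rewrite -expr2 sqr_ge0.
Qed.

Lemma ae_pos_ge0 f x : is_ae f -> ae_pos f -> f.1 x -> 0 <= f.2 x.
Proof.
move=> af /ae_leE [A [[_ dA] sA lA]] fx; rewrite leNgt; apply/negP => fx_lt0.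
have : nbhs x ([set y | f.2 y < 0] `&` f.1).
  apply: filterI; first exact: cvgr_lt (is_ae_cvg af fx) _ fx_lt0.
  by apply: open_nbhs_nbhs; split => //; case: (is_ae_dense_open af).
rewrite nbhsE => -[U [oU Ux] sU].
have [y [Uy Ay]] := dA U (ex_intro _ x Ux) oU.
by have [fy_lt0 _] := sU y Uy; move: (lA y Ay) => /=; rewrite leNgt fy_lt0.
Qed.


End Representatives.

Section Subrings.
Variables (X : topologicalType) (R : realType) (S : aerep X R -> Prop).
Hypothesis S_ae : forall f, S f -> is_ae f.

Let S_dense_open f : S f -> dense_open f.1.
Proof. by move/S_ae/is_ae_dense_open. Qed.

Lemma po_comm_ring_ae : ae_ring_closed S -> po_comm_ring S.
Proof.
move=> S_ring; have D := S_dense_open; have DI := @dense_openI X.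
split=> //.
- split.
  + by move=> f /D; exact: ae_eq_refl.
  + by move=> f g _ _; exact: ae_eq_sym.
  + by move=> f g h _ _ _; exact: ae_eq_trans.
  + by move=> f f' g g' _ _ _ _ ff' gg'; split; exact: ae_eq_lift2.
  + by move=> f f' _ _; exact: ae_eq_opp.
- split; split.
  + move=> f g h /D df /D dg /D dh; apply: ae_eq_ext => [|/=|x /=].
    * exact: DI df (DI _ _ dg dh).
    * by rewrite setIA.
    * exact: addrA.
  + move=> f g /D df /D dg; apply: ae_eq_ext => [|/=|x /=].
    * exact: DI df dg.
    * by rewrite setIC.
    * exact: addrC.
  + move=> f /D df; apply: ae_eq_ext => /=; rewrite ?setTI // => x.
    exact: add0r.
  + move=> f /D df; apply: ae_eq_ext => /=; rewrite ?setIid // => x.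
    exact: addNr.
  + move=> f g h /D df /D dg /D dh; apply: ae_eq_ext => [|/=|x /=].
    * exact: DI df (DI _ _ dg dh).
    * by rewrite setIA.
    * exact: mulrA.
  + move=> f g /D df /D dg; apply: ae_eq_ext => [|/=|x /=].
    * exact: DI df dg.
    * by rewrite setIC.
    * exact: mulrC.
  + move=> f /D df; apply: ae_eq_ext => /=; rewrite ?setTI // => x.
    exact: mul1r.
  + move=> f g h /D df /D dg /D dh; apply: ae_eq_ext => [|/=|x /=].
    * exact: DI df (DI _ _ dg dh).
    * by move=> x [fx [gx hx]].
    * exact: mulrDr.
- split.
  + move=> f f' g g' _ _ _ _ /ae_eq_sym ff' gg' fg.
    exact: ae_le_trans (ae_eq_le ff') (ae_le_trans fg (ae_eq_le gg')).
  + by move=> f /D /ae_eq_refl /ae_eq_le.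
  + by move=> f g h _ _ _; exact: ae_le_trans.
  + by move=> f g _ _; exact: ae_le_anti.
- split.
  + by move=> r s t _ _ /D; exact: ae_le_add.
  + by move=> r s _ _; exact: ae_pos_mul.
  + by move=> r /D; exact: ae_pos_sqr.
Qed.

Lemma archimedean_ae : ae_archimedean S.
Proof.
move=> g h /S_ae g_ae /S_ae h_ae kgh_pos; have [_ _ aeD _ _] := @is_ae_ring_closed X R.
apply/ae_leE; exists (g.1 `&` h.1); split => [|x [gx _]|x [gx hx]] //.
  by apply: dense_openI; exact: is_ae_dense_open.
apply: (archimedean_ge0 (b := h.2 x)) => k k_gt0.
rewrite -(ae_natmulE g k).
apply: (ae_pos_ge0 _ (kgh_pos k k_gt0)); first exact: aeD (is_ae_natmul _ g_ae) h_ae.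
by split=> //; exact: ae_natmul_dom.
Qed.

Lemma strongly_localizable_ae : ae_strongly_localizable S.
Proof.
split=> [r /S_dense_open|s Ss]; first exact: ae_pos_sqr.
split=> [[]//|s_cone]; split=> // r Sr /ae_leE [C [dC sC lC]].
have [p [_ /ae_leE [A [dA _ lA]] /ae_eqE [B [dB _ eB]]]] := s_cone.
apply/ae_leE; exists (A `&` B `&` C); split.
- by apply: dense_openI => //; exact: dense_openI.
- by move=> x [_ /sC [_ [rx _]]].
move=> x [[/lA /= p_ge0 /eB /= sx] /lC /=]; rewrite sx.
by rewrite pmulr_lge0 //; lra.
Qed.

Lemma ae_good_of : ae_ring_closed S -> ae_good S.
Proof.
by move=> S_ring; split; [exact: po_comm_ring_ae | exact: archimedean_ae |
  exact: strongly_localizable_ae].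
Qed.

End Subrings.

Theorem proposition15 (R : realType) (X : topologicalType)
  (hcomp : compact [set: X]) (hhaus : hausdorff_space X) :
  ae_good (@is_ae X R) /\
  (forall S : aerep X R -> Prop, ae_subring S -> ae_good S).
Proof.
split; first by apply: ae_good_of => //; exact: is_ae_ring_closed.
by move=> S [S_ae _ S_ring]; exact: ae_good_of.
Qed.
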